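(* Let $n\ge 2$ and consider the ladder system, i.e. the vector field $X_f=\sum_{i=1}^n x_i\big(\sum_{j=1}^n (1+i-j)\,x_j\big)\frac{\partial}{\partial x_i}$ on $\mathbf{C}^n$. Then for every $l,m\in\{1,\dots,n\}$ the vector field $$Y^l_m = x_m\, u^{\,l-m-1}\Big(D - u\,\frac{\partial}{\partial x_l}\Big)$$ is a Lie symmetry of the ladder system, i.e. $[X_f, Y^l_m]=0$ (on the open set $\{u\neq 0\}$, where the coefficients are defined).
   Context: Coordinates $x=(x_1,\dots,x_n)\in\mathbf{C}^n$. The $n$-dimensional homogeneous Lotka–Volterra (HLV) system with coefficients $a_{ij}\in\mathbf{C}$ is $\dot x_i = x_i\sum_{j=1}^n a_{ij}x_j$, $i=1,\dots,n$, identified with the vector field $X_f=\sum_i x_i\big(\sum_j a_{ij}x_j\big)\partial/\partial x_i$. The ladder system is the HLV system with $a_{ij}=1+i-j$ (matrix with first row $1,0,\dots,-n+2$ and last row $n,n-1,\dots,1$). Notation: $u=\sum_{j=1}^n x_j$ and $D=\sum_{j=1}^n x_j\,\partial/\partial x_j$. A vector field $X$ is a Lie symmetry of the system if $[X_f,X]=X_fX-XX_f=0$. *)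

From HB Require Import structures.
From mathcomp Require Import all_boot all_order all_algebra.
From mathcomp Require Import complex.
From mathcomp Require Import all_classical all_reals all_analysis.
Set Implicit Arguments. Unset Strict Implicit. Unset Printing Implicit Defensive.
Import Order.TTheory GRing.Theory Num.Theory.
Import numFieldNormedType.Exports.
Local Open Scope ring_scope.

(* Points of C^n are row vectors 'rV[C]_n; coordinate x_i (paper index i+1)
   is x ord0 i.  A vector field is a map C^n -> C^n (its coefficient vector). *)

Definition ev {K : numFieldType} {n : nat} (i : 'I_n) : 'rV[K]_n := delta_mx 0 i.

Definition pderiv {K : numFieldType} {n : nat} (i : 'I_n)
  (g : 'rV[K]_n -> K) (x : 'rV[K]_n) : K := 'D_(ev i) g x.

Definition coord {K : numFieldType} {n : nat} (k : 'I_n) (x : 'rV[K]_n) : K := x ord0 k.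

Definition lie_bracket {K : numFieldType} {n : nat}
  (X Y : 'rV[K]_n -> 'rV[K]_n) (x : 'rV[K]_n) : 'rV[K]_n :=
  \row_k \sum_(j < n)
     ((X x) ord0 j * pderiv j (fun y => (Y y) ord0 k) x
      - (Y x) ord0 j * pderiv j (fun y => (X y) ord0 k) x).

Definition usum {K : numFieldType} {n : nat} (x : 'rV[K]_n) : K := \sum_(j < n) x ord0 j.

Definition HLV {K : numFieldType} {n : nat} (A : 'M[K]_n) (x : 'rV[K]_n) : 'rV[K]_n :=
  \row_i (x ord0 i * \sum_(j < n) A i j * x ord0 j).

(* ladder matrix a_ij = 1 + i - j (shift invariant, so 0- or 1-based indexing agree) *)
Definition ladder_mx {K : numFieldType} (n : nat) : 'M[K]_n :=
  \matrix_(i, j) (1 + (i%:R : K) - (j%:R : K)).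

(* Euler field D = sum_j x_j d/dx_j  and  d/dx_l, as coefficient vectors *)
Definition euler {K : numFieldType} {n : nat} (x : 'rV[K]_n) : 'rV[K]_n := x.

Definition Ylm {K : numFieldType} {n : nat} (l m : 'I_n) (x : 'rV[K]_n) : 'rV[K]_n :=
  (x ord0 m * usum x ^ ((l%:Z - m%:Z - 1)%R : int)) *: (euler x - usum x *: ev l).

(* Away from [u = 0] all components of both fields are differentiable, so the
   k-th component of [[X, Y]] is the directional derivative of [Y_k] along [X x]
   minus that of [X_k] along [Y x], and both are explicit.  For the ladder
   matrix each row form is [L_k := sum_j a_kj x_j = (1 + k) u - S] with
   [S = sum_j j x_j]; hence [X(u) = sum_j x_j L_j = u^2], [L_m + (l-m-1) u = L_l - u]
   and [u a_kl = L_k - L_l + u], and with these the two derivatives cancel. *)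

From HB Require Import structures.
From mathcomp Require Import all_boot all_order all_algebra.
From mathcomp Require Import complex.
From mathcomp Require Import all_classical all_reals all_analysis.
From mathcomp Require Import ring.
Import Order.TTheory GRing.Theory Num.Theory.
Import numFieldNormedType.Exports.
Local Open Scope ring_scope.

Section IntegerPower.
Context {K : numFieldType} {V : normedModType K}.

Lemma differentiable_powz (f : V -> K) x (p : int) :
  f x != 0 -> differentiable f x -> differentiable (fun y => f y ^ p) x.
Proof.
move=> fx0 df; case: p => [[|k]|k].
- exact: differentiable_cst.
- rewrite -exprfctE; exact: differentiableX.
- apply: differentiableV; last by rewrite expf_neq0.
  by rewrite -exprfctE; exact: differentiableX.
Qed.

Lemma is_derive_inv {f : V -> K} {x v : V} {df : K} :
  f x != 0 -> is_derive x v f df ->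
  is_derive x v (fun y => (f y)^-1) (- (f x) ^- 2 *: df).
Proof.
move=> fx0 dfx; apply: DeriveDef; first exact: derivableV.
by rewrite deriveV // derive_val.
Qed.

Lemma is_derive_powz {f : V -> K} {x v : V} {df : K} (p : int) :
  f x != 0 -> is_derive x v f df ->
  is_derive x v (fun y => f y ^ p) (p%:~R * f x ^ (p - 1) * df).
Proof.
move=> fx0 dfx; case: p => k.
  have -> : (fun y => f y ^ k) = f ^+ k by apply/funext => y; rewrite exprfctE.
  apply: is_derive_eq; case: k => [|k]; first by rewrite !mul0r scale0r.
  by have -> : k.+1%:Z - 1 = k by rewrite intS addrC addKr.
have -> : (fun y => f y ^ Negz k) = (fun y => ((f ^+ k.+1) y)^-1).
  by apply/funext => y; rewrite exprfctE.
have fk0 : (f ^+ k.+1) x != 0 by rewrite exprfctE expf_neq0.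
apply: is_derive_eq; first exact: is_derive_inv fk0 (is_deriveX k.+1 dfx).
have -> : Negz k - 1 = Negz k.+1 by rewrite !NegzE (intS k.+1) opprD addrC.
change (f x ^ Negz k.+1) with (f x ^+ k.+2)^-1.
rewrite exprfctE NegzE rmorphN /= !exprS.
have fk : f x ^+ k != 0 by rewrite expf_neq0.
by rewrite /GRing.scale /=; field; rewrite fk fx0.
Qed.

End IntegerPower.

Section RowVectorFields.
Context {K : numFieldType} {n : nat}.
Implicit Types (x v w : 'rV[K]_n) (X Y : 'rV[K]_n -> 'rV[K]_n).

Lemma is_derive_coord (k : 'I_n) x v :
  is_derive x v (fun y : 'rV[K]_n => y ord0 k) (v ord0 k).
Proof.
have @f : {linear 'rV[K]_n -> K}.
  by exists (fun y : 'rV[K]_n => y ord0 k); do 2![eexists]; do ?[constructor];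
     rewrite ?mxE// => ? *; rewrite ?mxE//; move=> ?; rewrite !mxE.
have -> : (fun y : 'rV[K]_n => y ord0 k) = f by [].
apply: DeriveDef; first exact/diff_derivable/linear_differentiable/coord_continuous.
rewrite deriveE; last exact/linear_differentiable/coord_continuous.
by rewrite diff_lin //; exact: coord_continuous.
Qed.

Lemma usumE : usum = \sum_(j < n) (fun y : 'rV[K]_n => y ord0 j).
Proof. by apply/funext => y; rewrite fct_sumE. Qed.

Lemma is_derive_usum x v : is_derive x v usum (usum v).
Proof.
rewrite [X in is_derive _ _ X]usumE.
by apply: is_derive_sum => j; exact: is_derive_coord.
Qed.

Lemma differentiable_usum x : differentiable usum x.
Proof. by rewrite usumE; apply: differentiable_sum => j; exact: differentiable_coord. Qed.

Lemma sum_pderiv (g : 'rV[K]_n -> K) x w : differentiable g x ->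
  \sum_(j < n) w ord0 j * pderiv j g x = 'D_w g x.
Proof.
move=> dg; rewrite deriveE // {2}(row_sum_delta w) linear_sum.
by apply: eq_bigr => j _; rewrite linearZ /pderiv deriveE.
Qed.

Lemma lie_bracketE {X Y x} :
  (forall k, differentiable (fun y => X y ord0 k) x) ->
  (forall k, differentiable (fun y => Y y ord0 k) x) ->
  lie_bracket X Y x =
    \row_k ('D_(X x) (fun y => Y y ord0 k) x - 'D_(Y x) (fun y => X y ord0 k) x).
Proof.
by move=> dX dY; apply/rowP => k; rewrite !mxE sumrB !sum_pderiv.
Qed.

End RowVectorFields.

Section LotkaVolterra.
Context {K : numFieldType} {n : nat} (A : 'M[K]_n).

Lemma HLV_componentE (k : 'I_n) :
  (fun y => HLV A y ord0 k) =
  (fun y : 'rV[K]_n => y ord0 k) *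
  \sum_(j < n) A k j *: (fun y : 'rV[K]_n => y ord0 j).
Proof. by apply/funext => y; rewrite mxE /= fct_sumE. Qed.

Lemma differentiable_HLV (k : 'I_n) x : differentiable (fun y => HLV A y ord0 k) x.
Proof.
rewrite HLV_componentE; apply: differentiableM; first exact: differentiable_coord.
by apply: differentiable_sum => j; apply: differentiableZ; exact: differentiable_coord.
Qed.

Lemma derive_HLV (k : 'I_n) x v :
  'D_v (fun y => HLV A y ord0 k) x =
  v ord0 k * \sum_(j < n) A k j * x ord0 j + x ord0 k * \sum_(j < n) A k j * v ord0 j.
Proof.
have dsum : is_derive x v (\sum_(j < n) A k j *: (fun y : 'rV[K]_n => y ord0 j))
    (\sum_(j < n) A k j *: v ord0 j).
  by apply: is_derive_sum => j; apply: is_deriveZ; exact: is_derive_coord.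
rewrite HLV_componentE (derive_val (is_derive := is_deriveM (is_derive_coord k x v) dsum)).
by rewrite fct_sumE /= addrC mulrC.
Qed.

End LotkaVolterra.

Section SymmetryField.
Context {K : numFieldType} {n : nat} (l m : 'I_n).
Local Notation p := (l%:Z - m%:Z - 1).
Local Notation Y := (@Ylm K n l m).

Lemma YlmE (k : 'I_n) x :
  Y x ord0 k = x ord0 m * usum x ^ p * (x ord0 k - usum x * (k == l)%:R).
Proof. by rewrite !mxE eqxx. Qed.

Lemma Ylm_componentE (k : 'I_n) :
  (fun y => Y y ord0 k) =
  ((fun y : 'rV[K]_n => y ord0 m) * (fun y => usum y ^ p)) *
  ((fun y : 'rV[K]_n => y ord0 k) - usum * cst (k == l)%:R).
Proof. by apply/funext => y; rewrite YlmE. Qed.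

Lemma differentiable_Ylm (k : 'I_n) x :
  usum x != 0 -> differentiable (fun y => Y y ord0 k) x.
Proof.
move=> ux0; rewrite Ylm_componentE; apply: differentiableM.
  apply: differentiableM; first exact: differentiable_coord.
  exact: differentiable_powz (differentiable_usum x).
apply: differentiableB; first exact: differentiable_coord.
by apply: differentiableM; [exact: differentiable_usum | exact: differentiable_cst].
Qed.

Lemma derive_Ylm (k : 'I_n) x v : usum x != 0 ->
  'D_v (fun y => Y y ord0 k) x =
    (v ord0 m * usum x ^ p + x ord0 m * (p%:~R * usum x ^ (p - 1) * usum v))
      * (x ord0 k - usum x * (k == l)%:R)
    + x ord0 m * usum x ^ p * (v ord0 k - usum v * (k == l)%:R).
Proof.
move=> ux0.
have dfactor : is_derive x v ((fun y : 'rV[K]_n => y ord0 m) * (fun y => usum y ^ p))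
    (v ord0 m * usum x ^ p + x ord0 m * (p%:~R * usum x ^ (p - 1) * usum v)).
  apply: is_derive_eq.
    exact: is_deriveM (is_derive_coord m x v) (is_derive_powz p ux0 (is_derive_usum x v)).
  by rewrite /= addrC [v ord0 m * _]mulrC.
have dscaled : is_derive x v ((fun y : 'rV[K]_n => y ord0 k) - usum * cst (k == l)%:R)
    (v ord0 k - usum v * (k == l)%:R).
  apply: is_derive_eq.
    exact: is_deriveB (is_derive_coord k x v)
      (is_deriveM (is_derive_usum x v) (is_derive_cst _ x v)).
  by rewrite /= scaler0 add0r mulrC.
rewrite Ylm_componentE (derive_val (is_derive := is_deriveM dfactor dscaled)) /=.
by rewrite addrC [_ * (x ord0 k - _)]mulrC.
Qed.

Lemma sum_mul_Ylm (c : 'I_n -> K) x :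
  \sum_(j < n) c j * Y x ord0 j =
  x ord0 m * usum x ^ p * (\sum_(j < n) c j * x ord0 j - usum x * c l).
Proof.
under eq_bigr do rewrite YlmE mulrCA mulrBr mulrCA.
rewrite -mulr_sumr sumrB; congr (_ * (_ - _)).
rewrite (bigD1 l) //= eqxx mulr1 big1 ?addr0 // => j /negbTE ->.
by rewrite !mulr0.
Qed.

End SymmetryField.

Section Ladder.
Context {K : numFieldType} {n : nat}.

Lemma ladder_rowE (k : 'I_n) (y : 'rV[K]_n) :
  \sum_(j < n) ladder_mx n k j * y ord0 j =
  (1 + k%:R) * usum y - \sum_(j < n) j%:R * y ord0 j.
Proof.
rewrite /usum mulr_sumr -sumrB; apply: eq_bigr => j _.
by rewrite mxE mulrBl mulrDl mul1r.
Qed.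

Lemma usum_HLV_ladder (x : 'rV[K]_n) : usum (HLV (ladder_mx n) x) = usum x ^+ 2.
Proof.
set S := \sum_(j < n) j%:R * x ord0 j.
rewrite {1}/usum (eq_bigr (fun j => x ord0 j * usum x + j%:R * x ord0 j * usum x
  - x ord0 j * S)) => [|j _]; last by rewrite mxE ladder_rowE -/S; ring.
by rewrite sumrB big_split /= -!mulr_suml -/S -/(usum x); ring.
Qed.

Lemma lie_bracket_ladder_Ylm (l m : 'I_n) (x : 'rV[K]_n) :
  usum x != 0 -> lie_bracket (HLV (ladder_mx n)) (Ylm l m) x = 0.
Proof.
move=> hu; rewrite (lie_bracketE (fun k => differentiable_HLV (ladder_mx n) k x)
  (fun k => differentiable_Ylm l m k x hu)).
apply/rowP => k; rewrite [LHS]mxE [RHS]mxE.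
rewrite derive_Ylm // derive_HLV sum_mul_Ylm usum_HLV_ladder YlmE !mxE !ladder_rowE.
have hp : (l%:Z - m%:Z - 1)%:~R = l%:R - m%:R - 1 :> K by rewrite !rmorphB.
have hpow : usum x ^ (l%:Z - m%:Z - 1) = usum x ^ (l%:Z - m%:Z - 1 - 1) * usum x.
  by rewrite -{1}(subrK 1 (l%:Z - m%:Z - 1)) expfzDr // expr1z.
rewrite hp hpow.
by case: (eqVneq k l) => [->|_]; rewrite ?mulr1n ?mulr0n; ring.
Qed.

End Ladder.

Local Open Scope complex_scope.

Theorem theorem1 (R : rcfType) (n : nat) (hn : (2 <= n)%N) (l m : 'I_n)
  (x : 'rV[R[i]]_n) (hu : usum x != 0) :
  lie_bracket (HLV (ladder_mx n)) (Ylm l m) x = 0.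
Proof. exact: lie_bracket_ladder_Ylm. Qed.
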